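(* Let $\alpha\in(0,1)$ and let the walk start at $X_0=[\alpha N]$. Write $a=\alpha\wedge(1-\alpha)$ and $b=\alpha\vee(1-\alpha)$. (i) For the symmetric walk, $R_N/N$ converges in distribution as $N\to\infty$ to the absolutely continuous probability measure $G_{0,\alpha}$ on $[a,1]$. This measure is characterized by the fact that for every $\beta\ge0$, $$\lim_{N\to\infty}P_{[\alpha N]}(R_N/N\ge\beta)=\begin{cases}1,&0\le\beta\le a,\\ \dfrac{a}{\beta},& a<\beta<b,\\ \dfrac{1-\beta}{\beta},& b\le\beta\le1,\\ 0,&\beta>1.\end{cases}$$ Equivalently, $G_{0,\alpha}$ has density $g_\alpha(\beta)=a/\beta^2$ for $a<\beta<b$, $g_\alpha(\beta)=1/\beta^2$ for $b\le\beta\le1$, and $g_\alpha(\beta)=0$ otherwise. (ii) For the weakly asymmetric walk with parameter $c>0$, $R_N/N$ converges in distribution to the absolutely continuous probability measure $G_{c,\alpha}$ on $[a,1]$. This measure is characterized by the fact that for every $\beta\ge0$, $$\lim_{N\to\infty}P_{[\alpha N]}(R_N/N\ge\beta)=\begin{cases}1,&0\le\beta\le a,\\ \dfrac{1-e^{-4c\alpha}}{1-e^{-4c\beta}},&\alpha\le\beta\le1-\alpha,\\ \dfrac{1-e^{4c(1-\alpha)}}{1-e^{4c\beta}},&1-\alpha\le\beta\le\alpha,\\ \dfrac{e^{-4c\alpha}\big(e^{4c(1-\beta)}-1\big)}{1-e^{-4c\beta}},& b\le\beta\le1,\\ 0,&\beta>1.\end{cases}$$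
   Context: Fix $N\ge2$ and let $\mathcal T_N=\{0,1,\dots,N\}$. Let $(X_n)_{n\ge0}$ be a nearest-neighbour random walk on $\mathcal T_N$. At each step it moves from its current position $x$ to $x+1$ with probability $p_N$ and to $x-1$ with probability $q_N=1-p_N$, independently of the past. The walk is stopped the first time it is at $0$ or $N$. $P_x$ denotes the law of the walk started at $X_0=x$. The walk is called: - symmetric if $p_N=q_N=1/2$; - weakly asymmetric (with parameter $c>0$ fixed) if $q_N=1/2-c/N$ and $p_N=1/2+c/N$, for $N$ large enough that these lie in $(0,1)$; - asymmetric if $p_N=p$ and $q_N=q$ are fixed with $p+q=1$ and $q<p$. For $a\in\mathcal T_N$ let $T_a=\inf\{n\ge1:X_n=a\}$, and let $\tau_N=T_0\wedge T_N$ (the exit time). Let $G(y)=\sum_{k=0}^{\tau_N}\mathbf 1\{X_k=y\}$ be the number of visits to $y$ up to and including the exit time. The range is $R_N=\#\{y\in\mathcal T_N:G(y)\ge1\}$. Throughout, $[\cdot]$ denotes the integer part. *)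

From Stdlib Require Import Reals Lra Arith List Bool ClassicalEpsilon ZArith.
Import ListNotations.
Open Scope R_scope.

Definition step (N x : nat) (up : bool) : nat :=
  if (Nat.eqb x 0 || Nat.eqb x N)%bool then x
  else if up then S x else Nat.pred x.

Fixpoint traj (N x : nat) (l : list bool) : list nat :=
  x :: match l with
       | nil => nil
       | b :: l' => traj N (step N x b) l'
       end.

Fixpoint weight (p : R) (l : list bool) : R :=
  match l with
  | nil => 1
  | true :: l' => p * weight p l'
  | false :: l' => (1 - p) * weight p l'
  end.

Fixpoint paths (n : nat) : list (list bool) :=
  match n with
  | O => [nil]
  | S n' => map (cons true) (paths n') ++ map (cons false) (paths n')
  end.

Definition range_upto (N x : nat) (l : list bool) : nat :=
  length (filter (fun y => existsb (Nat.eqb y) (traj N x l)) (seq 0 (S N))).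

Definition prob_range_ge_upto (N : nat) (p : R) (x : nat) (beta : R) (n : nat) : R :=
  fold_right Rplus 0
    (map (fun l => if Rle_dec (beta * INR N) (INR (range_upto N x l))
                   then weight p l else 0) (paths n)).

(** Limit of a real sequence (chosen classically; meaningful when it exists). *)
Definition Rlim (u : nat -> R) : R := epsilon (inhabits 0) (fun l => Un_cv u l).

(** P_x(R_N >= beta N) = P_x(R_N/N >= beta): the event is increasing in the
    time horizon, so its probability is the (monotone) limit over n. *)
Definition prob_range_ge (N : nat) (p : R) (x : nat) (beta : R) : R :=
  Rlim (fun n => prob_range_ge_upto N p x beta n).

Definition start (alpha : R) (N : nat) : nat := Z.to_nat (Int_part (alpha * INR N)).

From Stdlib Require Import Reals Lra Lia List Bool ClassicalEpsilon ZArith.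
Open Scope R_scope.

(** Track the walk together with its running minimum and maximum. The range of
    the stopped walk is at least [K] iff either it exits at [0] after its
    maximum reached [K - 1], or it exits at [N] after its minimum reached
    [N + 1 - K]. With the scale function [s] (probability of exiting at [N]),
    this gives the exact value
      [P_x(R_N >= K) = s(x)/s(K-1) (1 - s(K-1)) + (1 - s(x))/(1 - s(N+1-K)) s(N+1-K)],
    each term being replaced by [1 - s(x)], resp. [s(x)], when the level is
    already reached at [x]. It is proved by checking that the right-hand side,
    as a function of (position, minimum, maximum), is harmonic and agrees with
    the indicator of the event once the walk is absorbed. For [x = [alpha N]]
    and [K ~ beta N], [s([g N])] tends to [g] for the symmetric walk and to
    [(1 - exp(-4cg)) / (1 - exp(-4c))] for the weakly asymmetric one. *)

Definition state := (nat * nat * nat)%type.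

Definition advance (N : nat) (s : state) (b : bool) : state :=
  let '(x, lo, hi) := s in
  let x' := step N x b in (x', Nat.min lo x', Nat.max hi x').

Fixpoint run (N : nat) (s : state) (l : list bool) : state :=
  match l with nil => s | b :: l' => run N (advance N s b) l' end.

Fixpoint expect (N : nat) (p : R) (n : nat) (g : state -> R) (s : state) : R :=
  match n with
  | O => g s
  | S n' => p * expect N p n' g (advance N s true)
            + (1 - p) * expect N p n' g (advance N s false)
  end.

Definition sum_paths (n : nat) (F : list bool -> R) : R :=
  fold_right Rplus 0 (map F (paths n)).

Lemma sum_list_app (l1 l2 : list R) :
  fold_right Rplus 0 (l1 ++ l2) = fold_right Rplus 0 l1 + fold_right Rplus 0 l2.
Proof. induction l1 as [|a l1 IH]; simpl; [ring | rewrite IH; ring]. Qed.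

Lemma sum_list_scal (A : Type) (c : R) (F : A -> R) (l : list A) :
  fold_right Rplus 0 (map (fun a => c * F a) l) = c * fold_right Rplus 0 (map F l).
Proof. induction l as [|a l IH]; simpl; [ring | rewrite IH; ring]. Qed.

Lemma sum_paths_S n F : sum_paths (S n) F =
  sum_paths n (fun l => F (true :: l)) + sum_paths n (fun l => F (false :: l)).
Proof. unfold sum_paths; simpl. rewrite map_app, sum_list_app, !map_map. reflexivity. Qed.

Lemma sum_paths_ext n F G : (forall l, F l = G l) -> sum_paths n F = sum_paths n G.
Proof. intros H; unfold sum_paths; rewrite (map_ext F G H); reflexivity. Qed.

Lemma expect_sum_paths N p n : forall g s,
  expect N p n g s = sum_paths n (fun l => weight p l * g (run N s l)).
Proof.
  induction n as [|n IH]; intros g s.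
  - unfold sum_paths; simpl. ring.
  - rewrite sum_paths_S. simpl expect. rewrite !IH.
    rewrite (sum_paths_ext n (fun l => weight p (true :: l) * g (run N s (true :: l)))
               (fun l => p * (weight p l * g (run N (advance N s true) l))))
      by (intros; simpl; ring).
    rewrite (sum_paths_ext n (fun l => weight p (false :: l) * g (run N s (false :: l)))
               (fun l => (1 - p) * (weight p l * g (run N (advance N s false) l))))
      by (intros; simpl; ring).
    unfold sum_paths; rewrite !sum_list_scal. reflexivity.
Qed.

Definition admissible (N : nat) (s : state) : Prop :=
  let '(x, lo, hi) := s in (lo <= x <= hi /\ hi <= N)%nat.

Lemma step_cases N x b : (x <= N)%nat ->
  (step N x b <= N)%nat /\ (step N x b = x \/ step N x b = S x \/ S (step N x b) = x)%nat.
Proof.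
  intros Hx; unfold step.
  destruct (Nat.eqb_spec x 0), (Nat.eqb_spec x N), b; simpl; lia.
Qed.

Lemma advance_admissible N s b : admissible N s -> admissible N (advance N s b).
Proof.
  destruct s as [[x lo] hi]; simpl; intros H.
  destruct (step_cases N x b) as [H1 H2]; lia.
Qed.

Lemma count_interval lo hi m : (lo <= hi)%nat ->
  length (filter (fun y => (lo <=? y)%nat && (y <=? hi)%nat) (seq 0 m))
  = (Nat.min (S hi) m - lo)%nat.
Proof.
  intros Hl; induction m as [|m IH].
  - simpl. lia.
  - rewrite seq_S, filter_app, length_app, IH. cbn [filter Nat.add].
    destruct (Nat.leb_spec lo m), (Nat.leb_spec m hi); cbn [andb length]; lia.
Qed.

Lemma traj_cons N x l : exists r, traj N x l = x :: r.
Proof. destruct l; simpl; eauto. Qed.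

(** A nearest-neighbour path visits exactly the integers between its minimum
    and its maximum. *)
Lemma range_run_gen N l : forall x lo hi, admissible N (x, lo, hi) ->
  length (filter (fun y => ((lo <=? y)%nat && (y <=? hi)%nat)
                           || existsb (Nat.eqb y) (traj N x l)) (seq 0 (S N)))
  = (let '(_, lo', hi') := run N (x, lo, hi) l in hi' - lo' + 1)%nat.
Proof.
  induction l as [|b l IH]; intros x lo hi Hv.
  - cbn [run]. simpl in Hv.
    rewrite (filter_ext _ (fun y => (lo <=? y)%nat && (y <=? hi)%nat)).
    + rewrite count_interval by lia. lia.
    + intros y. cbn [traj existsb].
      destruct (Nat.leb_spec lo y), (Nat.leb_spec y hi), (Nat.eqb_spec y x);
        cbn [andb orb]; try reflexivity; lia.
  - simpl run. simpl in Hv.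
    destruct (step_cases N x b ltac:(lia)) as [H1 H2].
    rewrite <- IH by (simpl; lia).
    f_equal. apply filter_ext. intros y.
    simpl traj. destruct (traj_cons N (step N x b) l) as [r Hr]. rewrite Hr.
    simpl existsb.
    destruct (Nat.leb_spec lo y), (Nat.leb_spec y hi), (Nat.eqb_spec y x),
      (Nat.eqb_spec y (step N x b)), (existsb (Nat.eqb y) r),
      (Nat.leb_spec (Nat.min lo (step N x b)) y), (Nat.leb_spec y (Nat.max hi (step N x b)));
      simpl; try reflexivity; lia.
Qed.

Lemma range_upto_run N x l : (x <= N)%nat ->
  range_upto N x l = (let '(_, lo, hi) := run N (x, x, x) l in hi - lo + 1)%nat.
Proof.
  intros Hx. rewrite <- range_run_gen by (simpl; lia).
  unfold range_upto. f_equal. apply filter_ext. intros y.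
  destruct (traj_cons N x l) as [r Hr]. rewrite Hr. simpl existsb.
  destruct (Nat.leb_spec x y), (Nat.leb_spec y x), (Nat.eqb_spec y x);
    simpl; try reflexivity; lia.
Qed.

Definition range_indicator (N : nat) (beta : R) (s : state) : R :=
  let '(_, lo, hi) := s in
  if Rle_dec (beta * INR N) (INR (hi - lo + 1)) then 1 else 0.

Lemma prob_range_ge_upto_expect N p x beta n : (x <= N)%nat ->
  prob_range_ge_upto N p x beta n = expect N p n (range_indicator N beta) (x, x, x).
Proof.
  intros Hx. rewrite expect_sum_paths. unfold prob_range_ge_upto.
  change (fold_right Rplus 0 (map ?F (paths n))) with (sum_paths n F).
  apply sum_paths_ext. intros l. rewrite range_upto_run by exact Hx.
  unfold range_indicator. destruct (run N (x, x, x) l) as [[? lo] hi].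
  destruct Rle_dec; ring.
Qed.

Section Expectation.
Variables (N : nat) (p : R).

Lemma expect_mono n : forall (g1 g2 : state -> R) s, 0 <= p <= 1 ->
  (forall s, admissible N s -> g1 s <= g2 s) -> admissible N s ->
  expect N p n g1 s <= expect N p n g2 s.
Proof.
  induction n as [|n IH]; intros g1 g2 s Hp H Hs; simpl; auto.
  pose proof (IH g1 g2 (advance N s true) Hp H (advance_admissible _ _ _ Hs)).
  pose proof (IH g1 g2 (advance N s false) Hp H (advance_admissible _ _ _ Hs)).
  nra.
Qed.

Lemma expect_sub n : forall g1 g2 s,
  expect N p n (fun s => g1 s - g2 s) s = expect N p n g1 s - expect N p n g2 s.
Proof. induction n as [|n IH]; intros; simpl; auto. rewrite !IH; ring. Qed.

Lemma expect_scal n : forall c g s,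
  expect N p n (fun s => c * g s) s = c * expect N p n g s.
Proof. induction n as [|n IH]; intros; simpl; auto. rewrite !IH; ring. Qed.

Lemma expect_abs_le n g h s : 0 <= p <= 1 ->
  (forall s, admissible N s -> Rabs (g s) <= h s) -> admissible N s ->
  Rabs (expect N p n g s) <= expect N p n h s.
Proof.
  intros Hp H Hs. apply Rabs_le. split.
  - replace (- expect N p n h s) with (expect N p n (fun s => -1 * h s) s)
      by (rewrite expect_scal; ring).
    apply expect_mono; auto. intros s' Hs'. specialize (H s' Hs').
    pose proof (Rle_abs (- g s')). rewrite Rabs_Ropp in *. lra.
  - apply expect_mono; auto. intros s' Hs'. specialize (H s' Hs').
    pose proof (Rle_abs (g s')). lra.
Qed.

Lemma expect_const n : forall c s, expect N p n (fun _ => c) s = c.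
Proof. induction n as [|n IH]; intros; simpl; auto. rewrite !IH; ring. Qed.

Lemma expect_ext n : forall g1 g2 s, (forall s, admissible N s -> g1 s = g2 s) ->
  admissible N s -> expect N p n g1 s = expect N p n g2 s.
Proof.
  induction n as [|n IH]; intros g1 g2 s H Hs; simpl; auto.
  rewrite !(IH g1 g2) by auto using advance_admissible. reflexivity.
Qed.

Lemma expect_add m : forall n g s,
  expect N p (m + n) g s = expect N p m (expect N p n g) s.
Proof. induction m as [|m IH]; intros; simpl; auto. rewrite !IH; auto. Qed.

Lemma expect_harmonic n : forall phi s,
  (forall s, admissible N s ->
     phi s = p * phi (advance N s true) + (1 - p) * phi (advance N s false)) ->
  admissible N s -> expect N p n phi s = phi s.
Proof.
  induction n as [|n IH]; intros phi s H Hs; simpl; auto.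
  rewrite !IH; auto using advance_admissible. symmetry; auto.
Qed.

Definition absorbed (x : nat) : bool := (Nat.eqb x 0 || Nat.eqb x N)%bool.

Definition alive (s : state) : R := let '(x, _, _) := s in if absorbed x then 0 else 1.

Lemma absorbed_ends x : (x = 0 \/ x = N)%nat -> absorbed x = true.
Proof.
  unfold absorbed. intros [->| ->]; rewrite Nat.eqb_refl; [reflexivity | apply orb_true_r].
Qed.

Lemma not_absorbed_cases x : absorbed x = false -> (0 < x < N)%nat \/ (N < x)%nat.
Proof.
  unfold absorbed. intros H. apply orb_false_iff in H as [H0 H1].
  apply Nat.eqb_neq in H0, H1. lia.
Qed.

Lemma expect_alive_absorbed n : forall x lo hi, (x = 0 \/ x = N)%nat ->
  expect N p n alive (x, lo, hi) = 0.
Proof.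
  induction n as [|n IH]; intros x lo hi Hx.
  - cbn [expect alive]. rewrite absorbed_ends by auto. reflexivity.
  - cbn [expect advance]. unfold step. fold (absorbed x).
    rewrite absorbed_ends by auto. rewrite !IH by auto. ring.
Qed.

Lemma alive_bounds s : 0 <= alive s <= 1.
Proof. destruct s as [[x lo] hi]; simpl; destruct (absorbed x); lra. Qed.

Lemma expect_alive_bounds n s : 0 <= p <= 1 -> admissible N s ->
  0 <= expect N p n alive s <= 1.
Proof.
  intros Hp Hs; split.
  - rewrite <- (expect_const n 0 s). apply expect_mono; auto. intros; apply alive_bounds.
  - rewrite <- (expect_const n 1 s). apply expect_mono; auto. intros; apply alive_bounds.
Qed.

Lemma expect_alive_le n s : 0 <= p <= 1 -> admissible N s ->
  expect N p n alive s <= alive s.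
Proof.
  intros Hp Hs. destruct s as [[x lo] hi].
  destruct (absorbed x) eqn:E; simpl alive; rewrite E.
  - unfold absorbed in E. apply orb_true_iff in E. rewrite !Nat.eqb_eq in E.
    rewrite expect_alive_absorbed by auto. lra.
  - apply expect_alive_bounds; auto.
Qed.

(** The walk is absorbed if its next [m] steps all go up. *)
Lemma expect_alive_upsteps m : forall x lo hi, 0 <= p <= 1 ->
  admissible N (x, lo, hi) -> (N - x <= m)%nat ->
  expect N p m alive (x, lo, hi) <= 1 - p ^ m.
Proof.
  induction m as [|m IH]; intros x lo hi Hp Hs Hm.
  - simpl in Hs. replace x with N by lia.
    rewrite expect_alive_absorbed by auto. simpl. lra.
  - assert (Hpm : 0 <= p ^ m <= 1).
    { split; [apply pow_le; lra|]. rewrite <- (pow1 m). apply pow_incr; lra. }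
    destruct (absorbed x) eqn:E.
    { unfold absorbed in E. apply orb_true_iff in E. rewrite !Nat.eqb_eq in E.
      rewrite expect_alive_absorbed by auto. simpl. nra. }
    cbn [expect advance]. unfold step. fold (absorbed x). rewrite E.
    simpl in Hs. pose proof (not_absorbed_cases x E).
    pose proof (IH (S x) (Nat.min lo (S x)) (Nat.max hi (S x)) Hp ltac:(simpl; lia) ltac:(lia)).
    pose proof (expect_alive_bounds m
      (Nat.pred x, Nat.min lo (Nat.pred x), Nat.max hi (Nat.pred x)) Hp ltac:(simpl; lia)).
    simpl pow. nra.
Qed.

Lemma expect_alive_geometric k : forall s, 0 <= p <= 1 -> admissible N s ->
  expect N p (k * N) alive s <= (1 - p ^ N) ^ k.
Proof.
  induction k as [|k IH]; intros s Hp Hs.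
  - simpl. pose proof (alive_bounds s). lra.
  - replace (S k * N)%nat with (N + k * N)%nat by lia.
    rewrite expect_add.
    assert (Hq : 0 <= 1 - p ^ N <= 1).
    { assert (0 <= p ^ N <= 1); [split; [apply pow_le; lra|]|lra].
      rewrite <- (pow1 N). apply pow_incr; lra. }
    assert (H1 : expect N p N (expect N p (k * N) alive) s
                 <= (1 - p ^ N) ^ k * expect N p N alive s).
    { rewrite <- expect_scal. apply expect_mono; auto. intros [[x lo] hi] Hs'.
      destruct (absorbed x) eqn:E; simpl alive; rewrite E.
      - unfold absorbed in E. apply orb_true_iff in E. rewrite !Nat.eqb_eq in E.
        rewrite expect_alive_absorbed by auto. lra.
      - rewrite Rmult_1_r. apply IH; auto. }
    destruct s as [[x lo] hi].
    pose proof (expect_alive_upsteps N x lo hi Hp Hs ltac:(lia)).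
    pose proof (pow_le _ k (proj1 Hq)).
    simpl pow. nra.
Qed.

Lemma expect_alive_vanishes s : 0 < p <= 1 -> admissible N s -> (0 < N)%nat ->
  forall eps, 0 < eps -> exists n0, forall n, (n >= n0)%nat -> expect N p n alive s < eps.
Proof.
  intros Hp Hs HN eps He.
  assert (Hq : 0 <= 1 - p ^ N < 1).
  { assert (0 < p ^ N <= 1); [split; [apply pow_lt; lra|]|lra].
    rewrite <- (pow1 N). apply pow_incr; lra. }
  destruct (pow_lt_1_zero (1 - p ^ N) ltac:(rewrite Rabs_pos_eq; lra) eps He) as [k Hk].
  exists (k * N)%nat. intros n Hn.
  replace n with (k * N + (n - k * N))%nat by lia.
  rewrite expect_add.
  apply Rle_lt_trans with (expect N p (k * N) alive s).
  - apply expect_mono; auto; [lra|]. intros; apply expect_alive_le; auto; lra.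
  - eapply Rle_lt_trans; [apply expect_alive_geometric; auto; lra|].
    specialize (Hk k (le_n _)). rewrite Rabs_pos_eq in Hk; auto. apply pow_le; lra.
Qed.

End Expectation.

Lemma Rlim_eq u l : Un_cv u l -> Rlim u = l.
Proof.
  intros H. unfold Rlim. apply (UL_sequence u); [apply epsilon_spec; eauto | exact H].
Qed.

Lemma ratio_times_complement_bounds a t : 0 <= a <= t -> 0 < t <= 1 ->
  0 <= a / t * (1 - t) <= 1 - a.
Proof.
  intros Ha Ht. set (q := a / t).
  assert (Haq : a = q * t) by (unfold q; field; lra).
  assert (0 <= q <= 1) by (split; nra).
  rewrite Haq. split; nra.
Qed.

Definition is_scale (p : R) (N : nat) (sc : nat -> R) : Prop :=
  sc 0%nat = 0 /\ sc N = 1 /\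
  (forall i j, (i < j <= N)%nat -> sc i < sc j) /\
  (forall x, (0 < x < N)%nat -> sc x = p * sc (S x) + (1 - p) * sc (Nat.pred x)).

Section ExactFormula.
Variables (N K : nat) (p beta : R) (sc : nat -> R).
Hypothesis Hp : 0 < p < 1.
Hypothesis Hscale : is_scale p N sc.
Hypothesis HK : (2 <= K <= N + 1)%nat.
Hypothesis HK_ceil : forall m, beta * INR N <= INR m <-> (K <= m)%nat.

Definition top_level := (K - 1)%nat.
Definition bottom_level := (N + 1 - K)%nat.

Definition low_exit_term (x hi : nat) : R :=
  if (top_level <=? hi)%nat then 1 - sc x
  else sc x / sc top_level * (1 - sc top_level).

Definition high_exit_term (x lo : nat) : R :=
  if (lo <=? bottom_level)%nat then sc x
  else (1 - sc x) / (1 - sc bottom_level) * sc bottom_level.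

Definition range_prob (s : state) : R :=
  let '(x, lo, hi) := s in low_exit_term x hi + high_exit_term x lo.

Let sc0 : sc 0%nat = 0. Proof. apply Hscale. Qed.
Let scN : sc N = 1. Proof. apply Hscale. Qed.
Let sc_harm : forall x, (0 < x < N)%nat -> sc x = p * sc (S x) + (1 - p) * sc (Nat.pred x).
Proof. apply Hscale. Qed.

Lemma scale_le i j : (i <= j <= N)%nat -> sc i <= sc j.
Proof.
  intros H. destruct (Nat.eq_dec i j) as [->|]; [lra|]. left; apply Hscale; lia.
Qed.

Lemma scale_bounds i : (i <= N)%nat -> 0 <= sc i <= 1.
Proof. intros H. rewrite <- sc0, <- scN. split; apply scale_le; lia. Qed.

Lemma scale_top_pos : 0 < sc top_level.
Proof. rewrite <- sc0. apply Hscale. unfold top_level; lia. Qed.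

Lemma scale_bottom_lt1 : sc bottom_level < 1.
Proof. rewrite <- scN. apply Hscale. unfold bottom_level; lia. Qed.

Lemma low_exit_term_below y h : (h < top_level \/ y = top_level)%nat ->
  low_exit_term y h = sc y / sc top_level * (1 - sc top_level).
Proof.
  intros H. pose proof scale_top_pos. unfold low_exit_term.
  destruct (Nat.leb_spec top_level h); [|reflexivity].
  replace y with top_level by lia. field. lra.
Qed.

Lemma high_exit_term_above y l : (bottom_level < l \/ y = bottom_level)%nat ->
  high_exit_term y l = (1 - sc y) / (1 - sc bottom_level) * sc bottom_level.
Proof.
  intros H. pose proof scale_bottom_lt1. unfold high_exit_term.
  destruct (Nat.leb_spec l bottom_level); [|reflexivity].
  replace y with bottom_level by lia. field. lra.
Qed.

Lemma low_exit_term_harmonic x hi : (0 < x < N)%nat -> (x <= hi)%nat ->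
  low_exit_term x hi
  = p * low_exit_term (S x) (Nat.max hi (S x)) + (1 - p) * low_exit_term (Nat.pred x) hi.
Proof.
  intros Hx Hh. pose proof scale_top_pos.
  destruct (Nat.leb_spec top_level hi).
  - unfold low_exit_term.
    rewrite !(proj2 (Nat.leb_le _ _)) by lia. rewrite (sc_harm x Hx). ring.
  - rewrite !low_exit_term_below by lia. rewrite (sc_harm x Hx). field. lra.
Qed.

Lemma high_exit_term_harmonic x lo : (0 < x < N)%nat -> (lo <= x)%nat ->
  high_exit_term x lo
  = p * high_exit_term (S x) lo + (1 - p) * high_exit_term (Nat.pred x) (Nat.min lo (Nat.pred x)).
Proof.
  intros Hx Hl. pose proof scale_bottom_lt1.
  destruct (Nat.leb_spec lo bottom_level).
  - unfold high_exit_term.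
    rewrite !(proj2 (Nat.leb_le _ _)) by lia. rewrite (sc_harm x Hx). ring.
  - rewrite !high_exit_term_above by lia. rewrite (sc_harm x Hx). field. lra.
Qed.

Lemma range_prob_harmonic s : admissible N s ->
  range_prob s = p * range_prob (advance N s true) + (1 - p) * range_prob (advance N s false).
Proof.
  destruct s as [[x lo] hi]. simpl admissible. intros Hv.
  cbn [advance]. unfold step. fold (absorbed N x).
  destruct (absorbed N x) eqn:E.
  - replace (Nat.min lo x) with lo by lia. replace (Nat.max hi x) with hi by lia. ring.
  - destruct (not_absorbed_cases N x E) as [Hx|]; [|lia]. unfold range_prob.
    replace (Nat.min lo (S x)) with lo by lia.
    replace (Nat.max hi (Nat.pred x)) with hi by lia.
    rewrite (low_exit_term_harmonic x hi), (high_exit_term_harmonic x lo) by lia. ring.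
Qed.

Lemma range_prob_bounds s : admissible N s -> 0 <= range_prob s <= 1.
Proof.
  destruct s as [[x lo] hi]. simpl admissible. intros Hv. simpl range_prob.
  pose proof scale_top_pos. pose proof scale_bottom_lt1.
  pose proof (scale_bounds x ltac:(lia)).
  assert (HA : 0 <= low_exit_term x hi <= 1 - sc x).
  { unfold low_exit_term. destruct (Nat.leb_spec top_level hi); [lra|].
    apply ratio_times_complement_bounds; [|pose proof (scale_bounds top_level ltac:(unfold top_level; lia)); lra].
    split; [lra|]. apply scale_le. unfold top_level in *; lia. }
  assert (HB : 0 <= high_exit_term x lo <= sc x).
  { unfold high_exit_term. destruct (Nat.leb_spec lo bottom_level); [lra|].
    assert (sc bottom_level <= sc x) by (apply scale_le; lia).
    pose proof (scale_bounds bottom_level ltac:(unfold bottom_level; lia)).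
    pose proof (ratio_times_complement_bounds (1 - sc x) (1 - sc bottom_level)
                  ltac:(lra) ltac:(lra)) as Hr.
    replace (1 - (1 - sc bottom_level)) with (sc bottom_level) in Hr by ring. lra. }
  lra.
Qed.

Lemma range_prob_absorbed s : admissible N s -> alive N s = 0 ->
  range_prob s = range_indicator N beta s.
Proof.
  destruct s as [[x lo] hi]. simpl admissible. intros Hv Hu.
  simpl in Hu. destruct (absorbed N x) eqn:E; [|lra].
  unfold absorbed in E. apply orb_true_iff in E. rewrite !Nat.eqb_eq in E.
  simpl range_prob. unfold low_exit_term, high_exit_term, range_indicator.
  pose proof scale_top_pos. pose proof scale_bottom_lt1.
  destruct E as [->| ->].
  - replace lo with 0%nat by lia. rewrite sc0. rewrite (proj2 (Nat.leb_le 0 _)) by lia.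
    destruct (Rle_dec (beta * INR N) (INR (hi - 0 + 1))) as [Hr|Hr];
      rewrite HK_ceil in Hr; destruct (Nat.leb_spec top_level hi);
      unfold top_level in *; try lia; field; lra.
  - replace hi with N by lia. rewrite scN. rewrite (proj2 (Nat.leb_le top_level N)) by (unfold top_level; lia).
    destruct (Rle_dec (beta * INR N) (INR (N - lo + 1))) as [Hr|Hr];
      rewrite HK_ceil in Hr; destruct (Nat.leb_spec lo bottom_level);
      unfold bottom_level in *; try lia; field; lra.
Qed.

Lemma range_indicator_near_range_prob s : admissible N s ->
  Rabs (range_indicator N beta s - range_prob s) <= alive N s.
Proof.
  intros Hv. destruct s as [[x lo] hi].
  destruct (absorbed N x) eqn:E.
  - rewrite range_prob_absorbed by (auto; simpl; rewrite E; auto).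
    rewrite Rminus_diag, Rabs_R0. simpl. rewrite E. lra.
  - simpl alive. rewrite E.
    pose proof (range_prob_bounds _ Hv). unfold range_indicator.
    destruct Rle_dec; apply Rabs_le; lra.
Qed.

Lemma prob_range_ge_exact x0 : (x0 <= N)%nat ->
  prob_range_ge N p x0 beta = range_prob (x0, x0, x0).
Proof.
  intros Hx. unfold prob_range_ge. apply Rlim_eq. intros eps He.
  assert (Hv : admissible N (x0, x0, x0)) by (simpl; lia).
  destruct (expect_alive_vanishes N p _ ltac:(lra) Hv ltac:(lia) eps He) as [n0 Hn0].
  exists n0. intros n Hn. unfold Rdist. rewrite prob_range_ge_upto_expect by auto.
  rewrite <- (expect_harmonic N p n range_prob (x0, x0, x0))
    by auto using range_prob_harmonic.
  rewrite <- expect_sub.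
  eapply Rle_lt_trans; [|exact (Hn0 n Hn)].
  apply expect_abs_le; auto using range_indicator_near_range_prob; lra.
Qed.

End ExactFormula.

Lemma Un_cv_const c : Un_cv (fun _ => c) c.
Proof. intros eps He. exists 0%nat. intros. unfold Rdist. rewrite Rminus_diag, Rabs_R0. lra. Qed.

Lemma Un_cv_eventually_eq (u v : nat -> R) l :
  (exists N0, forall N, (N >= N0)%nat -> u N = v N) -> Un_cv v l -> Un_cv u l.
Proof.
  intros [N0 H] Hv eps He. destruct (Hv eps He) as [N1 H1].
  exists (Nat.max N0 N1). intros n Hn. rewrite H by lia. apply H1; lia.
Qed.

Lemma Un_cv_inv (u : nat -> R) l : Un_cv u l -> l <> 0 -> Un_cv (fun n => / u n) (/ l).
Proof.
  intros H Hl. apply (continuity_seq (fun x => / x)); auto.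
  change (fun x => / x) with (/ id)%F. apply continuity_pt_inv; auto.
  apply derivable_continuous_pt, derivable_pt_id.
Qed.

Lemma Un_cv_div (u v : nat -> R) a b : Un_cv u a -> Un_cv v b -> b <> 0 ->
  Un_cv (fun n => u n / v n) (a / b).
Proof. intros Hu Hv Hb. apply CV_mult; auto. apply Un_cv_inv; auto. Qed.

Lemma Un_cv_exp (u : nat -> R) l : Un_cv u l -> Un_cv (fun n => exp (u n)) (exp l).
Proof.
  intros H. apply (continuity_seq exp u l); auto.
  apply derivable_continuous_pt, derivable_pt_exp.
Qed.

Lemma eventually_lt_linear b C : 0 < b -> exists N0, forall N, (N >= N0)%nat -> C < b * INR N.
Proof.
  intros Hb. destruct (archimed (Rabs C / b)) as [H1 _].
  assert (0 <= Rabs C / b) by (apply Rmult_le_pos; [apply Rabs_pos | left; apply Rinv_0_lt_compat; lra]).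
  assert (Hz : (0 <= up (Rabs C / b))%Z) by (apply le_IZR; simpl; lra).
  exists (Z.to_nat (up (Rabs C / b))). intros N HN.
  assert (IZR (up (Rabs C / b)) <= INR N).
  { rewrite <- (Z2Nat.id _ Hz), <- INR_IZR_INZ. apply le_INR. lia. }
  assert (Rabs C < b * INR N).
  { apply Rmult_lt_reg_r with (/ b); [apply Rinv_0_lt_compat; lra|].
    replace (b * INR N * / b) with (INR N) by (field; lra). unfold Rdiv in *. lra. }
  pose proof (Rle_abs C). lra.
Qed.

Lemma Un_cv_div_INR C : Un_cv (fun N => C / INR N) 0.
Proof.
  intros eps He. destruct (eventually_lt_linear eps (Rabs C) He) as [N0 H0].
  exists (S N0). intros n Hn. specialize (H0 n ltac:(lia)).
  assert (0 < INR n) by (apply lt_0_INR; lia).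
  unfold Rdist. rewrite Rminus_0_r. unfold Rdiv.
  rewrite Rabs_mult, Rabs_inv, (Rabs_pos_eq (INR n)) by lra.
  apply Rmult_lt_reg_r with (INR n); auto.
  rewrite Rmult_assoc, Rinv_l, Rmult_1_r by lra. lra.
Qed.

Lemma Un_cv_dominated (u v : nat -> R) l :
  (exists N0, forall N, (N >= N0)%nat -> Rabs (u N - l) <= v N) -> Un_cv v 0 -> Un_cv u l.
Proof.
  intros [N0 H] Hv eps He. destruct (Hv eps He) as [N1 H1].
  exists (Nat.max N0 N1). intros n Hn. unfold Rdist.
  specialize (H n ltac:(lia)). specialize (H1 n ltac:(lia)). unfold Rdist in H1.
  rewrite Rminus_0_r in H1. pose proof (Rle_abs (v n)). lra.
Qed.

Lemma Un_cv_squeeze (a b u : nat -> R) l :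
  (exists N0, forall N, (N >= N0)%nat -> a N <= u N <= b N) ->
  Un_cv a l -> Un_cv b l -> Un_cv u l.
Proof.
  intros [N0 H] Ha Hb eps He. destruct (Ha eps He) as [N1 H1]. destruct (Hb eps He) as [N2 H2].
  exists (Nat.max N0 (Nat.max N1 N2)). intros n Hn.
  specialize (H n ltac:(lia)). specialize (H1 n ltac:(lia)). specialize (H2 n ltac:(lia)).
  unfold Rdist in *. apply Rabs_def2 in H1, H2. apply Rabs_def1; lra.
Qed.

Definition near_linear (u : nat -> nat) (g : R) : Prop :=
  exists C N0, forall N, (N >= N0)%nat -> Rabs (INR (u N) - g * INR N) <= C.

Lemma near_linear_ratio u g : near_linear u g -> Un_cv (fun N => INR (u N) / INR N) g.
Proof.
  intros [C [N0 H]]. apply Un_cv_dominated with (fun N => C / INR N); [|apply Un_cv_div_INR].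
  exists (S N0). intros N HN.
  assert (0 < INR N) by (apply lt_0_INR; lia).
  replace (INR (u N) / INR N - g) with ((INR (u N) - g * INR N) / INR N) by (field; lra).
  unfold Rdiv. rewrite Rabs_mult, Rabs_inv, (Rabs_pos_eq (INR N)) by lra.
  apply Rmult_le_compat_r; [left; apply Rinv_0_lt_compat; lra|]. apply H; lia.
Qed.

Lemma ceiling_exists t : exists K, forall m, t <= INR m <-> (K <= m)%nat.
Proof.
  destruct (Rle_lt_dec t 0) as [Ht|Ht].
  { exists 0%nat. intros m; split; [lia|]. intros _. pose proof (pos_INR m); lra. }
  destruct (archimed t) as [H1 _].
  assert (Hz : (0 <= up t)%Z) by (apply le_IZR; simpl; lra).
  assert (Hex : t <= INR (Z.to_nat (up t))) by (rewrite INR_IZR_INZ, Z2Nat.id by exact Hz; lra).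
  assert (Hmin : forall n, t <= INR n -> exists K, t <= INR K /\
     (forall m, (m < K)%nat -> INR m < t)).
  { induction n as [|n IH]; intros Hn.
    - exists 0%nat. split; auto; lia.
    - destruct (Rle_lt_dec t (INR n)) as [H|H]; [auto|].
      exists (S n). split; auto. intros m Hm.
      apply Rle_lt_trans with (INR n); auto. apply le_INR; lia. }
  destruct (Hmin _ Hex) as [K [HK1 HK2]]. exists K. intros m; split.
  - intros Hm. destruct (Nat.le_gt_cases K m) as [|Hlt]; auto. specialize (HK2 m Hlt). lra.
  - intros Hm. apply Rle_trans with (INR K); auto. apply le_INR; auto.
Qed.

Definition ceiling (t : R) : nat :=
  epsilon (inhabits 0%nat) (fun K => forall m, t <= INR m <-> (K <= m)%nat).

Lemma ceiling_spec t : forall m, t <= INR m <-> (ceiling t <= m)%nat.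
Proof. unfold ceiling. apply epsilon_spec. apply ceiling_exists. Qed.

Lemma ceiling_bounds t : 0 <= t -> t <= INR (ceiling t) < t + 1.
Proof.
  intros Ht. split.
  - apply ceiling_spec. lia.
  - destruct (ceiling t) as [|n] eqn:E; [simpl; lra|].
    assert (~ t <= INR n) by (rewrite ceiling_spec; lia).
    rewrite S_INR. lra.
Qed.

Lemma start_bounds alpha N : 0 <= alpha ->
  INR (start alpha N) <= alpha * INR N < INR (start alpha N) + 1.
Proof.
  intros Ha. unfold start.
  pose proof (base_Int_part (alpha * INR N)) as [H1 H2].
  assert (0 <= alpha * INR N) by (apply Rmult_le_pos; auto; apply pos_INR).
  assert (Hz : (0 <= Int_part (alpha * INR N))%Z)
    by (enough (-1 < Int_part (alpha * INR N))%Z by lia; apply lt_IZR; simpl; lra).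
  rewrite INR_IZR_INZ, Z2Nat.id by auto. lra.
Qed.

Lemma start_le alpha N : 0 <= alpha <= 1 -> (start alpha N <= N)%nat.
Proof.
  intros Ha. pose proof (start_bounds alpha N (proj1 Ha)). pose proof (pos_INR N).
  apply INR_le. nra.
Qed.

Lemma near_linear_start alpha : 0 <= alpha -> near_linear (start alpha) alpha.
Proof.
  intros Ha. exists 1, 0%nat. intros N _. pose proof (start_bounds alpha N Ha).
  apply Rabs_le. lra.
Qed.

Lemma prob_range_ge_const N p x beta c : (x <= N)%nat ->
  (forall s, admissible N s -> range_indicator N beta s = c) -> prob_range_ge N p x beta = c.
Proof.
  intros Hx H. unfold prob_range_ge. apply Rlim_eq.
  apply Un_cv_eventually_eq with (fun _ => c); [|apply Un_cv_const].
  exists 0%nat. intros n _. rewrite prob_range_ge_upto_expect by auto.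
  rewrite (expect_ext N p n _ (fun _ => c)); auto; [apply expect_const | simpl; lia].
Qed.

(** The two summands are the contributions of exits at [0] and at [N]. *)
Definition range_limit (sig : R -> R) (alpha beta : R) : R :=
  (if Rle_dec beta alpha then 1 - sig alpha else sig alpha / sig beta * (1 - sig beta))
  + (if Rle_dec beta (1 - alpha) then sig alpha
     else (1 - sig alpha) / (1 - sig (1 - beta)) * sig (1 - beta)).

Section ScalingLimit.
Variables (alpha beta : R) (pN : nat -> R) (scN : nat -> nat -> R) (sig : R -> R).
Hypothesis Halpha : 0 < alpha < 1.
Hypothesis Hscale :
  exists N0, forall N, (N >= N0)%nat -> 0 < pN N < 1 /\ is_scale (pN N) N (scN N).
Hypothesis Hsig : forall u g, near_linear u g -> Un_cv (fun N => scN N (u N)) (sig g).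
Hypothesis Hsig_pos : forall g, 0 < g <= 1 -> sig g <> 0.
Hypothesis Hsig_lt1 : forall g, 0 <= g < 1 -> sig g <> 1.

Let x0 (N : nat) := start alpha N.
Let Kb (N : nat) := ceiling (beta * INR N).

Lemma Kb_bounds N : 0 <= beta -> beta * INR N <= INR (Kb N) < beta * INR N + 1.
Proof. intros Hb. apply ceiling_bounds. apply Rmult_le_pos; auto; apply pos_INR. Qed.

Lemma Kb_le : 0 <= beta <= 1 -> forall N, (Kb N <= N + 1)%nat.
Proof.
  intros Hb N. apply Nat.lt_succ_r, INR_lt. pose proof (Kb_bounds N ltac:(lra)).
  rewrite S_INR, plus_INR. simpl. pose proof (pos_INR N). nra.
Qed.

Lemma Kb_ge2 : 0 < beta -> exists N0, forall N, (N >= N0)%nat -> (2 <= Kb N)%nat.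
Proof.
  intros Hb. destruct (eventually_lt_linear beta 1 Hb) as [N0 H0]. exists N0. intros N HN.
  specialize (H0 N HN). pose proof (Kb_bounds N ltac:(lra)).
  apply INR_lt. simpl. lra.
Qed.

Lemma near_linear_top : 0 < beta <= 1 -> near_linear (fun N => top_level (Kb N)) beta.
Proof.
  intros Hb. destruct (Kb_ge2 ltac:(lra)) as [N1 H1]. exists 1, N1. intros N HN.
  specialize (H1 N HN). pose proof (Kb_bounds N ltac:(lra)).
  unfold top_level. rewrite minus_INR by lia. simpl. apply Rabs_le. lra.
Qed.

Lemma near_linear_bottom : 0 < beta <= 1 ->
  near_linear (fun N => bottom_level N (Kb N)) (1 - beta).
Proof.
  intros Hb. exists 1, 0%nat. intros N _. pose proof (Kb_bounds N ltac:(lra)).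
  pose proof (Kb_le ltac:(lra) N).
  unfold bottom_level. rewrite minus_INR, plus_INR by lia. simpl. apply Rabs_le. lra.
Qed.

Lemma top_le_start : 0 <= beta <= alpha -> forall N, (top_level (Kb N) <= x0 N)%nat.
Proof.
  intros Hb N. unfold top_level. pose proof (start_bounds alpha N ltac:(lra)).
  enough (Kb N <= x0 N + 1)%nat by lia.
  apply ceiling_spec. rewrite plus_INR. simpl. pose proof (pos_INR N).
  assert (0 <= (alpha - beta) * INR N) by (apply Rmult_le_pos; lra). unfold x0. lra.
Qed.

Lemma start_lt_top : alpha < beta ->
  exists N0, forall N, (N >= N0)%nat -> (x0 N < top_level (Kb N))%nat.
Proof.
  intros Hb. destruct (eventually_lt_linear (beta - alpha) 1 ltac:(lra)) as [N0 H0].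
  exists N0. intros N HN. specialize (H0 N HN).
  pose proof (start_bounds alpha N ltac:(lra)). pose proof (Kb_bounds N ltac:(lra)).
  unfold top_level. enough (x0 N + 1 < Kb N)%nat by lia.
  apply INR_lt. rewrite plus_INR. simpl. unfold x0 in *. lra.
Qed.

Lemma start_le_bottom : 0 <= beta <= 1 - alpha -> forall N, (x0 N <= bottom_level N (Kb N))%nat.
Proof.
  intros Hb N. unfold bottom_level, x0. pose proof (start_bounds alpha N ltac:(lra)).
  pose proof (start_le alpha N ltac:(lra)).
  enough (Kb N <= N + 1 - start alpha N)%nat by lia.
  apply ceiling_spec. rewrite minus_INR, plus_INR by lia. simpl. pose proof (pos_INR N).
  assert (0 <= (1 - alpha - beta) * INR N) by (apply Rmult_le_pos; lra). lra.
Qed.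

Lemma bottom_lt_start : 1 - alpha < beta <= 1 ->
  exists N0, forall N, (N >= N0)%nat -> (bottom_level N (Kb N) < x0 N)%nat.
Proof.
  intros Hb. destruct (eventually_lt_linear (beta - (1 - alpha)) 2 ltac:(lra)) as [N0 H0].
  exists N0. intros N HN. specialize (H0 N HN). pose proof (Kb_le ltac:(lra) N).
  pose proof (start_bounds alpha N ltac:(lra)). pose proof (Kb_bounds N ltac:(lra)).
  unfold bottom_level. enough (N + 1 < Kb N + x0 N)%nat by lia.
  apply INR_lt. rewrite !plus_INR. simpl. unfold x0 in *. lra.
Qed.

Lemma prob_range_ge_eventually_exact : 0 < beta <= 1 ->
  exists N0, forall N, (N >= N0)%nat ->
    prob_range_ge N (pN N) (x0 N) beta
    = low_exit_term (Kb N) (scN N) (x0 N) (x0 N)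
      + high_exit_term N (Kb N) (scN N) (x0 N) (x0 N).
Proof.
  intros Hb. destruct Hscale as [N0 H0]. destruct (Kb_ge2 ltac:(lra)) as [N1 H1].
  exists (Nat.max N0 N1). intros N HN.
  destruct (H0 N ltac:(lia)) as [Hp Hs]. specialize (H1 N ltac:(lia)).
  apply prob_range_ge_exact; auto using ceiling_spec.
  - split; auto. apply Kb_le; lra.
  - apply start_le; lra.
Qed.

Lemma Un_cv_low_exit_term : 0 < beta <= 1 ->
  Un_cv (fun N => low_exit_term (Kb N) (scN N) (x0 N) (x0 N))
    (if Rle_dec beta alpha then 1 - sig alpha else sig alpha / sig beta * (1 - sig beta)).
Proof.
  intros Hb. pose proof (Hsig _ _ (near_linear_start alpha ltac:(lra))) as Hx.
  pose proof (Hsig _ _ (near_linear_top Hb)) as Ht.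
  destruct (Rle_dec beta alpha) as [Hle|Hgt].
  - apply Un_cv_eventually_eq with (fun N => 1 - scN N (x0 N)).
    + exists 0%nat. intros N _. unfold low_exit_term.
      rewrite (proj2 (Nat.leb_le _ _)) by (apply top_le_start; lra). reflexivity.
    + apply CV_minus; auto using Un_cv_const.
  - apply Un_cv_eventually_eq
      with (fun N => scN N (x0 N) / scN N (top_level (Kb N)) * (1 - scN N (top_level (Kb N)))).
    + destruct (start_lt_top ltac:(lra)) as [N0 H0]. exists N0. intros N HN.
      unfold low_exit_term. rewrite (proj2 (Nat.leb_gt _ _)) by auto. reflexivity.
    + apply CV_mult; [apply Un_cv_div; auto|apply CV_minus; auto using Un_cv_const].
Qed.

Lemma Un_cv_high_exit_term : 0 < beta <= 1 ->
  Un_cv (fun N => high_exit_term N (Kb N) (scN N) (x0 N) (x0 N))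
    (if Rle_dec beta (1 - alpha) then sig alpha
     else (1 - sig alpha) / (1 - sig (1 - beta)) * sig (1 - beta)).
Proof.
  intros Hb. pose proof (Hsig _ _ (near_linear_start alpha ltac:(lra))) as Hx.
  pose proof (Hsig _ _ (near_linear_bottom Hb)) as Ht.
  destruct (Rle_dec beta (1 - alpha)) as [Hle|Hgt].
  - apply Un_cv_eventually_eq with (fun N => scN N (x0 N)); auto.
    exists 0%nat. intros N _. unfold high_exit_term.
    rewrite (proj2 (Nat.leb_le _ _)) by (apply start_le_bottom; lra). reflexivity.
  - apply Un_cv_eventually_eq with (fun N => (1 - scN N (x0 N))
       / (1 - scN N (bottom_level N (Kb N))) * scN N (bottom_level N (Kb N))).
    + destruct (bottom_lt_start ltac:(lra)) as [N0 H0]. exists N0. intros N HN.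
      unfold high_exit_term. rewrite (proj2 (Nat.leb_gt _ _)) by auto. reflexivity.
    + apply CV_mult; auto. apply Un_cv_div; try apply CV_minus; auto using Un_cv_const.
      specialize (Hsig_lt1 (1 - beta) ltac:(lra)). lra.
Qed.

Lemma Un_cv_prob_range_ge : 0 <= beta <= 1 ->
  Un_cv (fun N => prob_range_ge N (pN N) (start alpha N) beta) (range_limit sig alpha beta).
Proof.
  intros Hb. destruct (Req_dec beta 0) as [->|Hb0].
  - apply Un_cv_eventually_eq with (fun _ => 1).
    + exists 0%nat. intros N _. apply prob_range_ge_const; [apply start_le; lra|].
      intros [[x lo] hi] _. unfold range_indicator. rewrite Rmult_0_l.
      destruct Rle_dec as [|Hn]; [auto|]. exfalso. apply Hn, pos_INR.
    + unfold range_limit. do 2 (destruct Rle_dec; [|lra]).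
      replace (1 - sig alpha + sig alpha) with 1 by ring. apply Un_cv_const.
  - apply Un_cv_eventually_eq with (fun N => low_exit_term (Kb N) (scN N) (x0 N) (x0 N)
                                    + high_exit_term N (Kb N) (scN N) (x0 N) (x0 N)).
    + apply prob_range_ge_eventually_exact. lra.
    + apply CV_plus; [apply Un_cv_low_exit_term | apply Un_cv_high_exit_term]; lra.
Qed.

End ScalingLimit.

Lemma prob_range_ge_vanishes alpha beta (pN : nat -> R) : 0 <= alpha <= 1 -> 1 < beta ->
  Un_cv (fun N => prob_range_ge N (pN N) (start alpha N) beta) 0.
Proof.
  intros Ha Hb. apply Un_cv_eventually_eq with (fun _ => 0); [|apply Un_cv_const].
  destruct (eventually_lt_linear (beta - 1) 1 ltac:(lra)) as [N0 H0].
  exists N0. intros N HN. apply prob_range_ge_const.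
  - apply start_le; auto.
  - intros [[x lo] hi] Hv. simpl in Hv. unfold range_indicator.
    destruct Rle_dec as [Hr|]; auto. exfalso. specialize (H0 N HN).
    assert (INR (hi - lo + 1) <= INR N + 1) by (rewrite <- S_INR; apply le_INR; lia).
    lra.
Qed.

Lemma range_limit_below sig alpha beta : beta <= alpha -> beta <= 1 - alpha ->
  range_limit sig alpha beta = 1.
Proof.
  intros H1 H2. unfold range_limit.
  destruct Rle_dec; [|lra]. destruct Rle_dec; [ring|lra].
Qed.

Lemma is_scale_symmetric N : (1 <= N)%nat -> is_scale (1/2) N (fun x => INR x / INR N).
Proof.
  intros HN. assert (0 < INR N) by (apply lt_0_INR; lia).
  repeat split.
  - simpl. unfold Rdiv; ring.
  - field; lra.
  - intros i j Hij. apply Rmult_lt_compat_r; [apply Rinv_0_lt_compat; lra|].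
    apply lt_INR; lia.
  - intros [|x] Hx; [lia|]. simpl Nat.pred. rewrite !S_INR. field. lra.
Qed.

Lemma Un_cv_prob_range_ge_symmetric alpha beta l : 0 < alpha < 1 -> 0 <= beta <= 1 ->
  range_limit (fun g => g) alpha beta = l ->
  Un_cv (fun N => prob_range_ge N (1/2) (start alpha N) beta) l.
Proof.
  intros Ha Hb <-. apply (Un_cv_prob_range_ge alpha beta (fun _ => 1/2) (fun N x => INR x / INR N));
    auto; try lra.
  - exists 1%nat. intros N HN. split; [lra|]. apply is_scale_symmetric. lia.
  - intros u g Hu. apply near_linear_ratio, Hu.
  - intros g Hg. lra.
  - intros g Hg. lra.
Qed.

Lemma range_limit_symmetric_middle alpha beta : 0 < alpha < 1 ->
  Rmin alpha (1 - alpha) < beta < Rmax alpha (1 - alpha) ->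
  range_limit (fun g => g) alpha beta = Rmin alpha (1 - alpha) / beta.
Proof.
  intros Ha Hb. unfold range_limit.
  destruct (Rle_dec alpha (1 - alpha)) as [Hle|Hgt].
  - rewrite Rmin_left, Rmax_right in * by lra.
    do 2 (destruct Rle_dec; try lra). field. lra.
  - rewrite Rmin_right, Rmax_left in * by lra.
    do 2 (destruct Rle_dec; try lra). field. lra.
Qed.

Lemma range_limit_symmetric_high alpha beta : 0 < alpha < 1 ->
  Rmax alpha (1 - alpha) <= beta <= 1 ->
  range_limit (fun g => g) alpha beta = (1 - beta) / beta.
Proof.
  intros Ha Hb. pose proof (Rmax_l alpha (1 - alpha)). pose proof (Rmax_r alpha (1 - alpha)).
  unfold range_limit.
  destruct (Rle_dec beta alpha); destruct (Rle_dec beta (1 - alpha)).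
  - replace alpha with (1/2) by lra. replace beta with (1/2) by lra. field.
  - replace beta with alpha by lra. field. lra.
  - replace beta with (1 - alpha) by lra. field. lra.
  - field. lra.
Qed.

Lemma exp_pow x n : exp x ^ n = exp (INR n * x).
Proof. rewrite <- Rpower_pow by apply exp_pos. unfold Rpower. rewrite ln_exp. reflexivity. Qed.

Lemma pow_lt_pow_contract (r : R) i j : 0 < r < 1 -> (i < j)%nat -> r ^ j < r ^ i.
Proof.
  intros Hr Hij. replace j with (i + (j - i))%nat by lia. rewrite pow_add.
  assert (0 < r ^ i) by (apply pow_lt; lra).
  assert (r ^ (j - i) < 1) by (apply pow_lt_1_compat; lra || lia).
  nra.
Qed.

Lemma Un_cv_INR_ratio k : Un_cv (fun N => INR N / (INR N + k)) 1.
Proof.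
  apply Un_cv_dominated with (fun N => (2 * Rabs k) / INR N); [|apply Un_cv_div_INR].
  destruct (eventually_lt_linear 1 (2 * Rabs k) ltac:(lra)) as [N0 H0].
  exists (S N0). intros N HN. specialize (H0 N ltac:(lia)). rewrite Rmult_1_l in H0.
  pose proof (Rle_abs k). pose proof (Rle_abs (-k)). rewrite Rabs_Ropp in *.
  assert (0 < INR N) by (apply lt_0_INR; lia).
  replace (INR N / (INR N + k) - 1) with (- k / (INR N + k)) by (field; lra).
  unfold Rdiv. rewrite Rabs_mult, Rabs_inv, Rabs_Ropp, (Rabs_pos_eq (INR N + k)) by lra.
  replace (2 * Rabs k * / INR N) with (Rabs k * / (INR N / 2)) by (field; lra).
  apply Rmult_le_compat_l; [apply Rabs_pos|]. apply Rinv_le_contravar; lra.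
Qed.

Section WeaklyAsymmetric.
Variable c : R.
Hypothesis Hc : 0 < c.

(** With [p = 1/2 + c/N], [q/p = (N - 2c)/(N + 2c)] and the scale function is
    [(1 - (q/p)^x) / (1 - (q/p)^N)]; [(q/p)^(g N)] tends to [exp (-4 c g)]. *)
Definition drift_ratio (N : nat) : R := (INR N - 2 * c) / (INR N + 2 * c).
Definition asymmetric_scale (N x : nat) : R := (1 - drift_ratio N ^ x) / (1 - drift_ratio N ^ N).
Definition asymmetric_scale_limit (g : R) : R := (1 - exp (-4 * c * g)) / (1 - exp (-4 * c * 1)).

Lemma drift_ratio_bounds N : 4 * c < INR N -> 0 < drift_ratio N < 1.
Proof.
  intros H. unfold drift_ratio. split; [apply Rdiv_lt_0_compat; lra|].
  apply Rmult_lt_reg_r with (INR N + 2 * c); [lra|]. unfold Rdiv.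
  rewrite Rmult_assoc, Rinv_l, Rmult_1_r by lra. lra.
Qed.

Lemma is_scale_asymmetric N : 4 * c < INR N ->
  0 < 1/2 + c / INR N < 1 /\ is_scale (1/2 + c / INR N) N (asymmetric_scale N).
Proof.
  intros HN. pose proof (drift_ratio_bounds N HN) as Hr.
  assert (HN0 : (0 < N)%nat) by (apply INR_lt; simpl; lra).
  assert (HrN : drift_ratio N ^ N < 1)
    by (rewrite <- (pow_O (drift_ratio N)); apply pow_lt_pow_contract; auto).
  assert (Hc4 : c / INR N < 1/4).
  { apply Rmult_lt_reg_r with (INR N); [lra|]. unfold Rdiv.
    rewrite Rmult_assoc, Rinv_l by lra. lra. }
  assert (0 < c / INR N) by (apply Rdiv_lt_0_compat; lra).
  unfold asymmetric_scale. repeat split; try lra.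
  - field. lra.
  - intros i j Hij. apply Rmult_lt_compat_r; [apply Rinv_0_lt_compat; lra|].
    pose proof (pow_lt_pow_contract (drift_ratio N) i j Hr ltac:(lia)). lra.
  - intros [|x] Hx; [lia|]. simpl Nat.pred. simpl pow.
    assert (Hpr : (1/2 + c / INR N) * drift_ratio N = 1 - (1/2 + c / INR N))
      by (unfold drift_ratio; field; lra).
    set (P := 1/2 + c / INR N) in *. set (r := drift_ratio N) in *.
    replace (1 - P) with (P * r) by lra.
    assert (Hsum : P * (1 + r) = 1) by lra.
    transitivity (P * (1 + r) * ((1 - r * r ^ x) / (1 - r ^ N))); [rewrite Hsum; ring|].
    field. lra.
Qed.

Lemma Un_cv_near_linear_scaled u g k : near_linear u g ->
  Un_cv (fun N => INR (u N) * (- (4 * c) / (INR N + k))) (-4 * c * g).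
Proof.
  intros Hu.
  apply Un_cv_eventually_eq
    with (fun N => - (4 * c) * (INR (u N) / INR N) * (INR N / (INR N + k))).
  - destruct (eventually_lt_linear 1 (Rabs k) ltac:(lra)) as [N0 H0]. exists (S N0). intros N HN.
    specialize (H0 N ltac:(lia)). pose proof (Rle_abs k). pose proof (Rle_abs (-k)).
    rewrite Rabs_Ropp in *. assert (0 < INR N) by (apply lt_0_INR; lia). field. lra.
  - replace (-4 * c * g) with (- (4 * c) * g * 1) by ring.
    apply CV_mult; [apply CV_mult; [apply Un_cv_const|apply near_linear_ratio; auto]|].
    apply Un_cv_INR_ratio.
Qed.

(** [exp (-4c/(N - 2c)) <= (N - 2c)/(N + 2c) <= exp (-4c/(N + 2c))], from [1 + t <= exp t]. *)
Lemma Un_cv_drift_ratio_pow u g : near_linear u g ->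
  Un_cv (fun N => drift_ratio N ^ (u N)) (exp (-4 * c * g)).
Proof.
  intros Hu.
  apply Un_cv_squeeze with (fun N => exp (INR (u N) * (- (4 * c) / (INR N + -2 * c))))
                           (fun N => exp (INR (u N) * (- (4 * c) / (INR N + 2 * c))));
    [|apply Un_cv_exp, Un_cv_near_linear_scaled; auto..].
  destruct (eventually_lt_linear 1 (4 * c) ltac:(lra)) as [N0 H0].
  exists N0. intros N HN. specialize (H0 N HN). rewrite Rmult_1_l in H0.
  pose proof (drift_ratio_bounds N H0).
  rewrite <- !exp_pow. split; apply pow_incr; split; try lra; [left; apply exp_pos| |].
  - pose proof (exp_ineq1_le (4 * c / (INR N - 2 * c))).
    replace (- (4 * c) / (INR N + -2 * c)) with (- (4 * c / (INR N - 2 * c))) by (field; lra).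
    rewrite exp_Ropp. unfold drift_ratio.
    replace ((INR N - 2 * c) / (INR N + 2 * c)) with (/ (1 + 4 * c / (INR N - 2 * c)))
      by (field; lra).
    apply Rinv_le_contravar; auto.
    assert (0 < 4 * c / (INR N - 2 * c)) by (apply Rdiv_lt_0_compat; lra). lra.
  - pose proof (exp_ineq1_le (- (4 * c) / (INR N + 2 * c))). unfold drift_ratio.
    replace ((INR N - 2 * c) / (INR N + 2 * c)) with (1 + - (4 * c) / (INR N + 2 * c))
      by (field; lra).
    auto.
Qed.

Lemma exp_neg_lt1 x : 0 < x -> 0 < exp (-4 * c * x) < 1.
Proof. intros. split; [apply exp_pos|]. rewrite <- exp_0. apply exp_increasing. nra. Qed.

Lemma exp_neg_decreasing x y : x < y -> exp (-4 * c * y) < exp (-4 * c * x).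
Proof. intros. apply exp_increasing. nra. Qed.

Lemma Un_cv_prob_range_ge_asymmetric alpha beta l : 0 < alpha < 1 -> 0 <= beta <= 1 ->
  range_limit asymmetric_scale_limit alpha beta = l ->
  Un_cv (fun N => prob_range_ge N (1/2 + c / INR N) (start alpha N) beta) l.
Proof.
  intros Ha Hb <-. pose proof (exp_neg_lt1 1 ltac:(lra)).
  apply (Un_cv_prob_range_ge alpha beta (fun N => 1/2 + c / INR N) asymmetric_scale); auto.
  - destruct (eventually_lt_linear 1 (4 * c) ltac:(lra)) as [N0 H0]. exists N0. intros N HN.
    apply is_scale_asymmetric. specialize (H0 N HN). lra.
  - intros u g Hu. apply Un_cv_div; [| |lra]; apply CV_minus; auto using Un_cv_const.
    + apply Un_cv_drift_ratio_pow; auto.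
    + apply (Un_cv_drift_ratio_pow (fun N => N)).
      exists 0, 0%nat. intros. rewrite Rmult_1_l, Rminus_diag, Rabs_R0. lra.
  - intros g Hg. unfold asymmetric_scale_limit. pose proof (exp_neg_lt1 g ltac:(lra)).
    apply Rmult_integral_contrapositive. split; [lra|]. apply Rinv_neq_0_compat. lra.
  - intros g Hg. unfold asymmetric_scale_limit.
    destruct (Req_dec g 0) as [->|Hg0].
    + rewrite Rmult_0_r, exp_0. unfold Rdiv. rewrite Rminus_diag, Rmult_0_l. lra.
    + pose proof (exp_neg_decreasing g 1 ltac:(lra)). intros Heq.
      apply Rmult_eq_compat_r with (r := 1 - exp (-4 * c * 1)) in Heq.
      unfold Rdiv in Heq. rewrite Rmult_assoc, Rinv_l, Rmult_1_l, Rmult_1_r in Heq by lra. lra.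
Qed.

Lemma exp_neg_complement x : exp (-4 * c * (1 - x)) = exp (-4 * c * 1) / exp (-4 * c * x).
Proof.
  replace (-4 * c * (1 - x)) with (-4 * c * 1 + - (-4 * c * x)) by ring.
  rewrite exp_plus, exp_Ropp. reflexivity.
Qed.

Lemma exp_complement x : exp (4 * c * (1 - x)) = exp (-4 * c * x) / exp (-4 * c * 1).
Proof.
  replace (4 * c * (1 - x)) with (-4 * c * x + - (-4 * c * 1)) by ring.
  rewrite exp_plus, exp_Ropp. reflexivity.
Qed.

Lemma exp_scaled_inv x : exp (4 * c * x) = / exp (-4 * c * x).
Proof. rewrite <- exp_Ropp. f_equal. ring. Qed.

Lemma exp_neg_sum_one x y : x + y = 1 -> exp (-4 * c * 1) = exp (-4 * c * x) * exp (-4 * c * y).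
Proof. intros H. rewrite <- exp_plus, <- H. f_equal. ring. Qed.

Lemma range_limit_asymmetric_alpha_small alpha beta : 0 < alpha -> alpha <= beta <= 1 - alpha ->
  range_limit asymmetric_scale_limit alpha beta
  = (1 - exp (-4 * c * alpha)) / (1 - exp (-4 * c * beta)).
Proof.
  intros Ha Hb. pose proof (exp_neg_lt1 1 ltac:(lra)). pose proof (exp_neg_lt1 alpha Ha).
  pose proof (exp_neg_lt1 beta ltac:(lra)).
  unfold range_limit, asymmetric_scale_limit.
  destruct Rle_dec; (destruct Rle_dec; [|lra]).
  - replace beta with alpha by lra. field. lra.
  - field. lra.
Qed.

Lemma range_limit_asymmetric_alpha_large alpha beta : alpha < 1 -> 1 - alpha <= beta <= alpha ->
  range_limit asymmetric_scale_limit alpha beta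
  = (1 - exp (4 * c * (1 - alpha))) / (1 - exp (4 * c * beta)).
Proof.
  intros Ha Hb. pose proof (exp_neg_lt1 1 ltac:(lra)). pose proof (exp_neg_lt1 alpha ltac:(lra)).
  pose proof (exp_neg_lt1 beta ltac:(lra)). pose proof (exp_neg_decreasing alpha 1 ltac:(lra)).
  unfold range_limit, asymmetric_scale_limit.
  destruct Rle_dec; [|lra]. destruct Rle_dec.
  - replace beta with (1 - alpha) by lra. rewrite exp_complement.
    field. repeat split; intro Hz; nra.
  - rewrite exp_neg_complement, exp_complement, exp_scaled_inv.
    field. repeat split; intro Hz; nra.
Qed.

Lemma range_limit_asymmetric_high alpha beta : 0 < alpha < 1 ->
  Rmax alpha (1 - alpha) <= beta <= 1 ->
  range_limit asymmetric_scale_limit alpha beta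
  = exp (-4 * c * alpha) * (exp (4 * c * (1 - beta)) - 1) / (1 - exp (-4 * c * beta)).
Proof.
  intros Ha Hb. pose proof (Rmax_l alpha (1 - alpha)). pose proof (Rmax_r alpha (1 - alpha)).
  pose proof (exp_neg_lt1 1 ltac:(lra)). pose proof (exp_neg_lt1 alpha ltac:(lra)).
  pose proof (exp_neg_lt1 beta ltac:(lra)).
  unfold range_limit, asymmetric_scale_limit. rewrite exp_complement.
  destruct (Rle_dec beta alpha); destruct (Rle_dec beta (1 - alpha)).
  - rewrite (exp_neg_sum_one alpha beta) by lra. replace beta with alpha by lra.
    field. repeat split; intro Hz; nra.
  - rewrite exp_neg_complement. replace beta with alpha by lra.
    field. repeat split; intro Hz; nra.
  - rewrite (exp_neg_sum_one alpha beta) by lra. field. repeat split; intro Hz; nra.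
  - rewrite exp_neg_complement. field. repeat split; intro Hz; nra.
Qed.

End WeaklyAsymmetric.

Theorem proposition2p1 (alpha : R) (Halpha : 0 < alpha < 1) :
  let a := Rmin alpha (1 - alpha) in
  let b := Rmax alpha (1 - alpha) in
  (* (i) symmetric walk, p_N = 1/2 *)
  (let P := fun (beta : R) (N : nat) =>
              prob_range_ge N (1/2) (start alpha N) beta in
   (forall beta, 0 <= beta <= a -> Un_cv (P beta) 1) /\
   (forall beta, a < beta < b -> Un_cv (P beta) (a / beta)) /\
   (forall beta, b <= beta <= 1 -> Un_cv (P beta) ((1 - beta) / beta)) /\
   (forall beta, 1 < beta -> Un_cv (P beta) 0)) /\
  (* (ii) weakly asymmetric walk, p_N = 1/2 + c/N *)
  (forall c : R, 0 < c ->
   let P := fun (beta : R) (N : nat) =>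
              prob_range_ge N (1/2 + c / INR N) (start alpha N) beta in
   (forall beta, 0 <= beta <= a -> Un_cv (P beta) 1) /\
   (forall beta, alpha <= beta <= 1 - alpha ->
      Un_cv (P beta) ((1 - exp (-4 * c * alpha)) / (1 - exp (-4 * c * beta)))) /\
   (forall beta, 1 - alpha <= beta <= alpha ->
      Un_cv (P beta) ((1 - exp (4 * c * (1 - alpha))) / (1 - exp (4 * c * beta)))) /\
   (forall beta, b <= beta <= 1 ->
      Un_cv (P beta)
        (exp (-4 * c * alpha) * (exp (4 * c * (1 - beta)) - 1) / (1 - exp (-4 * c * beta)))) /\
   (forall beta, 1 < beta -> Un_cv (P beta) 0)).
Proof.
  intros a b.
  assert (0 < a <= alpha /\ a <= 1 - alpha)
    by (repeat split; [apply Rmin_glb_lt; lra | apply Rmin_l | apply Rmin_r]).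
  assert (alpha <= b /\ 1 - alpha <= b <= 1)
    by (repeat split; [apply Rmax_l | apply Rmax_r | apply Rmax_lub; lra]).
  split; [|intros c Hc]; intros P; subst P; repeat split; intros beta Hb;
    try (apply prob_range_ge_vanishes; lra).
  - apply Un_cv_prob_range_ge_symmetric; [lra | lra | apply range_limit_below; lra].
  - apply Un_cv_prob_range_ge_symmetric; [lra | lra | apply range_limit_symmetric_middle; auto].
  - apply Un_cv_prob_range_ge_symmetric; [lra | lra | apply range_limit_symmetric_high; auto].
  - apply Un_cv_prob_range_ge_asymmetric; [lra | lra | lra | apply range_limit_below; lra].
  - apply Un_cv_prob_range_ge_asymmetric;
      [lra | lra | lra | apply range_limit_asymmetric_alpha_small; lra].
  - apply Un_cv_prob_range_ge_asymmetric;
      [lra | lra | lra | apply range_limit_asymmetric_alpha_large; lra].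
  - apply Un_cv_prob_range_ge_asymmetric;
      [lra | lra | lra | apply range_limit_asymmetric_high; auto].
Qed.
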